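(* In the $1/4$-rebate Marshallian Match, for every feasible bidder–asker pair $(i,j)$ and every strategy profile $(b,a)$, in every realization, $$u_i(b_{-i},a_{-j},b_i',a_j')+u_j(b_{-i},a_{-j},b_i',a_j')\;\ge\;\frac{s_{ij}}{4},$$ where $b_i'$ is the truthful strategy of $i$ ($b'_{i\ell}(t)=v_{i\ell}$ for all feasible askers $\ell$ and all $t$) and $a_j'$ is the truthful strategy of $j$ ($a'_{j\ell}(t)=c_{j\ell}$ for all feasible bidders $\ell$ and all $t$).
   Context: Bipartite setting: bidders and askers; bidder $i$ has value $v_{i\ell}\in\mathbb R$ for matching asker $\ell$ and asker $j$ has cost $c_{j\ell}\in\mathbb R$ for matching bidder $\ell$; surplus $s_{ij}=v_{ij}-c_{ji}$. $1/4$-rebate Marshallian Match: a global price $p(t)$ decreases continuously with $p(0)=+\infty$, $p(1)=0$. Each unmatched bidder $i$ maintains a bid $b_{i\ell}(t)\in\mathbb R$ on each feasible asker $\ell$, and each unmatched asker $j$ an ask $a_{j\ell}(t)\in\mathbb R$ on each feasible bidder $\ell$. No agent sees others' bids/asks; the only information received is being matched. As soon as an unmatched bidder $i$ and asker $j$ satisfy $b_{ij}(t)-a_{ji}(t)\ge p(t)$, they are matched and leave; the bidder pays $b_{ij}$, the asker receives $a_{ji}$, and each receives a rebate $(b_{ij}-a_{ji})/4$. Thus the bidder's utility is $v_{ij}-b_{ij}+(b_{ij}-a_{ji})/4$ and the asker's is $a_{ji}-c_{ji}+(b_{ij}-a_{ji})/4$; unmatched agents get $0$. $(b_{-i},a_{-j},b_i',a_j')$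 denotes the profile where $i$ and $j$ switch to $b_i'$, $a_j'$ and all others keep their strategies. *)

From Stdlib Require Import Reals Lra ClassicalDescription.
Open Scope R_scope.

(* Time runs over (0,1]; the global price p : R -> R is only meaningful there. *)
(* Price path: continuous and (weakly) decreasing on (0,1], p(1) = 0, and
   p(t) -> +oo as t -> 0+ (this encodes p(0) = +oo). *)
Record price_path (p : R -> R) : Prop := {
  pp_cont : forall t, 0 < t <= 1 -> forall eps, 0 < eps ->
      exists delta, 0 < delta /\
        forall s, 0 < s <= 1 -> Rabs (s - t) < delta -> Rabs (p s - p t) < eps;
  pp_decr : forall s t, 0 < s -> s <= t -> t <= 1 -> p t <= p s;
  pp_one : p 1 = 0;
  pp_zero : forall M, exists d, 0 < d /\ forall t, 0 < t < d -> M < p t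
}.

(* Strategies: bidder i bids b i l t on asker l at time t;
   asker j asks a j l t on bidder l at time t. *)
Definition bid_profile (B A : Type) := B -> A -> R -> R.
Definition ask_profile (B A : Type) := A -> B -> R -> R.

Definition upd {X Y : Type} (f : X -> Y) (x : X) (y : Y) : X -> Y :=
  fun z => if excluded_middle_informative (z = x) then y else f z.

Definition truthful_bid {B A : Type} (v : B -> A -> R) (i : B) : A -> R -> R :=
  fun l _ => v i l.
Definition truthful_ask {B A : Type} (c : A -> B -> R) (j : A) : B -> R -> R :=
  fun l _ => c j l.

(* An outcome (realization) of the mechanism: for each bidder, either unmatched
   (None) or matched to an asker at a time; likewise for askers. *)
Record outcome (B A : Type) := {
  mateB : B -> option (A * R);
  mateA : A -> option (B * R)
}.
Arguments mateB {B A}.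
Arguments mateA {B A}.

Definition presentB {B A} (o : outcome B A) (k : B) (t : R) : Prop :=
  forall l tau, mateB o k = Some (l, tau) -> t <= tau.
Definition presentA {B A} (o : outcome B A) (l : A) (t : R) : Prop :=
  forall k tau, mateA o l = Some (k, tau) -> t <= tau.

Record valid_run {B A : Type} (F : B -> A -> Prop) (p : R -> R)
    (b : bid_profile B A) (a : ask_profile B A) (o : outcome B A) : Prop := {
  vr_sym : forall k l tau, mateB o k = Some (l, tau) <-> mateA o l = Some (k, tau);
  vr_match : forall k l tau, mateB o k = Some (l, tau) ->
      F k l /\ 0 < tau <= 1 /\ b k l tau - a l k tau >= p tau;
  (* "as soon as": whenever a feasible present pair meets the price at
     time t, at least one of them is matched by time t *)
  vr_prompt : forall k l t, F k l -> 0 < t <= 1 ->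
      presentB o k t -> presentA o l t -> b k l t - a l k t >= p t ->
      (exists l' tau, mateB o k = Some (l', tau) /\ tau <= t) \/
      (exists k' tau, mateA o l = Some (k', tau) /\ tau <= t)
}.

Definition util_bidder {B A} (v : B -> A -> R) (b : bid_profile B A)
    (a : ask_profile B A) (o : outcome B A) (k : B) : R :=
  match mateB o k with
  | Some (l, tau) => v k l - b k l tau + (b k l tau - a l k tau) / 4
  | None => 0
  end.
Definition util_asker {B A} (c : A -> B -> R) (b : bid_profile B A)
    (a : ask_profile B A) (o : outcome B A) (l : A) : R :=
  match mateA o l with
  | Some (k, tau) => a l k tau - c l k + (b k l tau - a l k tau) / 4
  | None => 0
  end.

(* A truthful pair (i, j) bids its surplus s = v i j - c j i at every time, and a truthful
   agent matched at time tau earns at least p(tau)/4 of rebate, never less than 0.  If s > 0,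
   look at the first time tau at which i or j leaves.  Since p(1) = 0 < s such a time exists,
   and p(tau) >= s: otherwise, by continuity, p drops below s strictly before tau, the pair
   then meets the price while both are present, and one of them must leave at that earlier
   time.  The agent leaving at tau thus secures p(tau)/4 >= s/4 for the pair. *)
From Stdlib Require Import Reals Lra ClassicalDescription.
Open Scope R_scope.

Lemma upd_same {X Y : Type} (f : X -> Y) (x : X) (y : Y) : upd f x y x = y.
Proof.
  unfold upd; destruct (excluded_middle_informative (x = x)); congruence.
Qed.

Section PricePath.

Variable p : R -> R.
Hypothesis hp : price_path p.

Lemma price_ge0 (t : R) : 0 < t <= 1 -> 0 <= p t.
Proof.
  intros Ht; rewrite <- (pp_one p hp); apply (pp_decr p hp); lra.
Qed.

Lemma price_lt_before (T s : R) :
  0 < T <= 1 -> p T < s -> exists t, 0 < t < T /\ p t < s.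
Proof.
  intros HT Hs.
  destruct (pp_cont p hp T HT (s - p T) ltac:(lra)) as [d [Hd Hc]].
  set (t := Rmax (T / 2) (T - d / 2)).
  assert (Ht : T / 2 <= t /\ T - d / 2 <= t) by (split; [apply Rmax_l | apply Rmax_r]).
  assert (HtT : t < T) by (unfold t; apply Rmax_lub_lt; lra).
  exists t; split; [lra |].
  assert (Hdist : Rabs (t - T) < d) by (rewrite Rabs_left by lra; lra).
  specialize (Hc t ltac:(lra) Hdist); apply Rabs_def2 in Hc; lra.
Qed.

Lemma price_ge_at_sublevel_lb (T s : R) :
  0 < T <= 1 -> (forall t, 0 < t <= 1 -> p t < s -> T <= t) -> s <= p T.
Proof.
  intros HT Hlb.
  destruct (Rlt_le_dec (p T) s) as [Hlt | Hge]; [| exact Hge].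
  destruct (price_lt_before T s HT Hlt) as [t [Ht Hpt]].
  specialize (Hlb t ltac:(lra) Hpt); lra.
Qed.

End PricePath.

Definition departs {B A : Type} (o : outcome B A) (k : B) (l : A) (tau : R) : Prop :=
  (exists l', mateB o k = Some (l', tau)) \/ (exists k', mateA o l = Some (k', tau)).

Lemma departs_first {B A : Type} (o : outcome B A) (k : B) (l : A) :
  (exists tau, departs o k l tau) ->
  exists tau, departs o k l tau /\ forall tau', departs o k l tau' -> tau <= tau'.
Proof.
  unfold departs; intros [tau0 Hdep].
  destruct (mateB o k) as [[lk tk] |], (mateA o l) as [[kl tl] |].
  - destruct (Rle_lt_dec tk tl).
    + exists tk; split; [left; eauto |].
      intros tau' [[? E] | [? E]]; injection E; intros; subst; lra.
    + exists tl; split; [right; eauto |].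
      intros tau' [[? E] | [? E]]; injection E; intros; subst; lra.
  - exists tk; split; [left; eauto |].
    intros tau' [[? E] | [? E]]; [injection E; intros; subst; lra | discriminate].
  - exists tl; split; [right; eauto |].
    intros tau' [[? E] | [? E]]; [discriminate | injection E; intros; subst; lra].
  - destruct Hdep as [[? E] | [? E]]; discriminate.
Qed.

Section Run.

Variables (B A : Type) (F : B -> A -> Prop) (p : R -> R).
Variables (b : bid_profile B A) (a : ask_profile B A) (o : outcome B A).
Hypothesis hp : price_path p.
Hypothesis run : valid_run F p b a o.

Lemma departs_time_range (k : B) (l : A) (tau : R) : departs o k l tau -> 0 < tau <= 1.
Proof.
  intros [[l' E] | [k' E]].
  - apply (vr_match F p b a o run) in E; tauto.
  - apply (vr_sym F p b a o run), (vr_match F p b a o run) in E; tauto.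
Qed.

(* The promptness axiom only speaks of present agents; absent ones have departed earlier. *)
Lemma departs_by_price (k : B) (l : A) (t : R) :
  F k l -> 0 < t <= 1 -> b k l t - a l k t >= p t ->
  exists tau, departs o k l tau /\ tau <= t.
Proof.
  intros Hkl Ht Hspread.
  destruct (classic (exists tau, departs o k l tau /\ tau < t)) as [[tau [Hd Hlt]] | Hnone].
  { exists tau; split; [exact Hd | lra]. }
  assert (Hk : presentB o k t).
  { intros l' tau E; destruct (Rle_lt_dec t tau); [lra |].
    exfalso; apply Hnone; exists tau; split; [left; eauto | lra]. }
  assert (Hl : presentA o l t).
  { intros k' tau E; destruct (Rle_lt_dec t tau); [lra |].
    exfalso; apply Hnone; exists tau; split; [right; eauto | lra]. }
  destruct (vr_prompt F p b a o run k l t Hkl Ht Hk Hl Hspread)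
    as [[l' [tau [E Hle]]] | [k' [tau [E Hle]]]];
    exists tau; split; unfold departs; eauto.
Qed.

Section Truthful.

Variables (v : B -> A -> R) (c : A -> B -> R) (k : B) (l : A).
Hypothesis truth_k : b k = truthful_bid v k.
Hypothesis truth_l : a l = truthful_ask c l.

Lemma util_bidder_truthful_match (l' : A) (tau : R) :
  mateB o k = Some (l', tau) -> p tau / 4 <= util_bidder v b a o k.
Proof.
  intros E; unfold util_bidder; rewrite E, truth_k.
  apply (vr_match F p b a o run) in E; rewrite truth_k in E.
  unfold truthful_bid in *; lra.
Qed.

Lemma util_asker_truthful_match (k' : B) (tau : R) :
  mateA o l = Some (k', tau) -> p tau / 4 <= util_asker c b a o l.
Proof.
  intros E; unfold util_asker; rewrite E, truth_l.
  apply (vr_sym F p b a o run), (vr_match F p b a o run) in E; rewrite truth_l in E.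
  unfold truthful_ask in *; lra.
Qed.

Lemma util_bidder_truthful_ge0 : 0 <= util_bidder v b a o k.
Proof.
  destruct (mateB o k) as [[l' tau] |] eqn:E.
  - pose proof (util_bidder_truthful_match l' tau E).
    assert (Htau : 0 < tau <= 1) by (apply (departs_time_range k l); left; eauto).
    pose proof (price_ge0 p hp tau Htau); lra.
  - unfold util_bidder; rewrite E; lra.
Qed.

Lemma util_asker_truthful_ge0 : 0 <= util_asker c b a o l.
Proof.
  destruct (mateA o l) as [[k' tau] |] eqn:E.
  - pose proof (util_asker_truthful_match k' tau E).
    assert (Htau : 0 < tau <= 1) by (apply (departs_time_range k l); right; eauto).
    pose proof (price_ge0 p hp tau Htau); lra.
  - unfold util_asker; rewrite E; lra.
Qed.

Lemma util_truthful_pair_departs (tau : R) :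
  departs o k l tau -> p tau / 4 <= util_bidder v b a o k + util_asker c b a o l.
Proof.
  pose proof util_bidder_truthful_ge0; pose proof util_asker_truthful_ge0.
  intros [[l' E] | [k' E]].
  - pose proof (util_bidder_truthful_match l' tau E); lra.
  - pose proof (util_asker_truthful_match k' tau E); lra.
Qed.

End Truthful.

End Run.

Theorem mainTheorem12 (B A : Type) (F : B -> A -> Prop)
    (v : B -> A -> R) (c : A -> B -> R) (p : R -> R)
    (hp : price_path p)
    (b : bid_profile B A) (a : ask_profile B A) (i : B) (j : A)
    (hij : F i j) :
  let b' := upd b i (truthful_bid v i) in
  let a' := upd a j (truthful_ask c j) in
  forall o : outcome B A, valid_run F p b' a' o ->
    util_bidder v b' a' o i + util_asker c b' a' o j >= (v i j - c j i) / 4.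
Proof.
  intros b' a' o run.
  assert (truth_i : b' i = truthful_bid v i) by apply upd_same.
  assert (truth_j : a' j = truthful_ask c j) by apply upd_same.
  destruct (Rle_lt_dec (v i j - c j i) 0) as [Hs | Hs].
  { pose proof (util_bidder_truthful_ge0 B A F p b' a' o hp run v i j truth_i).
    pose proof (util_asker_truthful_ge0 B A F p b' a' o hp run c i j truth_j); lra. }
  assert (Hdeparts : forall t, 0 < t <= 1 -> p t <= v i j - c j i ->
            exists tau, departs o i j tau /\ tau <= t).
  { intros t Ht Hpt; apply (departs_by_price B A F p b' a' o run); auto.
    rewrite truth_i, truth_j; unfold truthful_bid, truthful_ask; lra. }
  destruct (departs_first o i j) as [tau [Hdep Hfirst]].
  { destruct (Hdeparts 1) as [tau [Hdep _]]; [lra | rewrite (pp_one p hp); lra | eauto]. }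
  assert (Hprice : v i j - c j i <= p tau).
  { apply (price_ge_at_sublevel_lb p hp).
    - exact (departs_time_range B A F p b' a' o run i j tau Hdep).
    - intros t Ht Hpt; destruct (Hdeparts t Ht ltac:(lra)) as [tau' [Hdep' Hle]].
      specialize (Hfirst tau' Hdep'); lra. }
  pose proof (util_truthful_pair_departs B A F p b' a' o hp run v c i j truth_i truth_j tau Hdep).
  lra.
Qed.
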